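(* Let $\chi,m\geq 2$ be integers. Then there exists a constant $\gamma=\gamma(\chi,m)>0$ such that the following holds. Let $F$ be a subhypergraph of a tournament hypergraph associated to $TT_\chi$, with vertex classes $V_1,\dots,V_\chi$. If $|V_i|\geq 1/\gamma$ for each $i\in[\chi]$ and $d(V_i,V_i,V_j)\geq 1-\gamma$ for every arc $(i,j)$ of $TT_\chi$, then $F$ contains a copy of $H(TT_\chi,m)$.
   Context: $TT_\chi$ is the transitive tournament on $[\chi]$. A 3-uniform hypergraph is a tournament hypergraph associated to a tournament $T_\chi$ on $[\chi]$ if its vertex set is partitioned into classes $A_1,\dots,A_\chi$ and its edges are exactly the triples $xyz$ with $x,y\in A_i$, $z\in A_j$, $(i,j)$ an arc of $T_\chi$; $H(T_\chi,m)$ is such a hypergraph with all classes of size $m$. For a 3-graph $F$ and $A,B,C\subseteq V(F)$, $E(A,B,C)$ is the set of ordered triples $(a,b,c)\in A\times B\times C$ of distinct vertices with $abc\in E(F)$, and $d(A,B,C)=|E(A,B,C)|$ divided by the number of ordered triples of distinct vertices in $A\times B\times C$. *)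

From mathcomp Require Import all_boot all_order all_algebra.
From mathcomp Require Import reals.
Set Implicit Arguments. Unset Strict Implicit. Unset Printing Implicit Defensive.
Import Order.TTheory GRing.Theory Num.Theory.

Definition TT_arc (chi : nat) (i j : 'I_chi) : bool := (i < j)%N.

(* F is a 3-graph on the finite vertex type V with edge set E (a set of
   3-element vertex sets), and cls assigns each vertex its class index. *)
Definition sub_tournament_hypergraph (chi : nat) (T : 'I_chi -> 'I_chi -> bool)
  (V : finType) (cls : V -> 'I_chi) (E : {set {set V}}) : Prop :=
  forall e, e \in E -> exists x y z : V,
    [/\ e = [set x; y; z], [&& x != y, x != z & y != z],
        cls x = cls y & T (cls x) (cls z)].

Definition vclass (chi : nat) (V : finType) (cls : V -> 'I_chi) (i : 'I_chi)
  : {set V} := [set v | cls v == i].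

Definition dist_triples (V : finType) (A B C : {set V}) : {set V * V * V} :=
  [set t : V * V * V | [&& t.1.1 \in A, t.1.2 \in B, t.2 \in C,
                          t.1.1 != t.1.2, t.1.1 != t.2 & t.1.2 != t.2]].

Definition edge_triples (V : finType) (E : {set {set V}}) (A B C : {set V})
  : {set V * V * V} :=
  [set t in dist_triples A B C | [set t.1.1; t.1.2; t.2] \in E].

Definition density (R : realType) (V : finType) (E : {set {set V}})
  (A B C : {set V}) : R :=
  (#|edge_triples E A B C|%:R / #|dist_triples A B C|%:R)%R.

(* F contains a copy of H(T,m): an injective map from the vertex set
   'I_chi * 'I_m of H(T,m) (class i = {i} x 'I_m) to V sending every edge
   {(i,a),(i,b),(j,c)} (a != b, (i,j) an arc) to an edge of F. *)
Definition contains_H (chi m : nat) (T : 'I_chi -> 'I_chi -> bool)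
  (V : finType) (E : {set {set V}}) : Prop :=
  exists f : 'I_chi * 'I_m -> V, injective f /\
    forall (i j : 'I_chi) (a b c : 'I_m), T i j -> a != b ->
      [set f (i, a); f (i, b); f (j, c)] \in E.

(* Pick a map g with g (i, a) in V_i uniformly at random.  For fixed distinct
   (i, a), (i, b), (j, c) the triple (g (i, a), g (i, b), g (j, c)) is uniform on
   V_i x V_i x V_j, so it is a non-edge with probability at most gamma by the
   density condition, and g (i, a) = g (i, b) has probability 1 / |V_i| <= gamma.
   Once 1 / gamma exceeds the number of these events, the union bound yields a g
   avoiding all of them: it is injective and maps every edge of H(TT_chi, m) to
   an edge of F.  Probabilities are replaced by counts in the finite product. *)

From mathcomp Require Import all_boot all_order all_algebra.
From mathcomp Require Import reals lra.
Set Implicit Arguments. Unset Strict Implicit. Unset Printing Implicit Defensive.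
Import Order.TTheory GRing.Theory Num.Theory.

Section ProductCounting.
Variables (I V : finType) (F : I -> {set V}).

Local Notation prodF := (@setXn I (fun _ => V) F).

Lemma card_setXn_agree (K : {set I}) (h : I -> V) :
  {in K, forall k, h k \in F k} ->
  #|[set g in prodF | [forall k in K, g k == h k]]| * \prod_(k in K) #|F k|
  = #|prodF|.
Proof.
move=> hF.
pose F' k := if k \in K then [set h k] else F k.
have -> : [set g in prodF | [forall k in K, g k == h k]] = @setXn I (fun _ => V) F'.
  apply/setP=> g; rewrite inE !in_setXn; apply/andP/forallP.
    move=> [/forallP gF /forallP gh] k; rewrite /F'; case: ifP => kK; last exact: gF.
    by have := gh k; rewrite kK inE.
  move=> gF'; split; apply/forallP=> k; have := gF' k; rewrite /F'; case: ifP => kK //=.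
    by rewrite inE => /eqP ->; apply: hF.
  by rewrite inE.
rewrite !cardsXn (bigID (mem K)) [in RHS](bigID (mem K)) /= mulnAC -big_split /=.
congr (_ * _); apply: eq_bigr => k; rewrite /F'; first by move=> ->; rewrite cards1 mul1n.
by move=> /negbTE ->.
Qed.

(* The event [rho g \in B] is a disjoint union of the fibres [rho g = t], each
   of which fixes the coordinates in [K] to [h t]. *)
Lemma card_setXn_preimage (T : finType) (K : {set I}) (rho : {ffun I -> V} -> T)
    (h : T -> I -> V) (B : {set T}) :
  (forall t, t \in B -> {in K, forall k, h t k \in F k}) ->
  (forall t g, t \in B -> (rho g == t) = [forall k in K, g k == h t k]) ->
  #|[set g in prodF | rho g \in B]| * \prod_(k in K) #|F k| = #|B| * #|prodF|.
Proof.
move=> hF hrho.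
rewrite -sum1_card (partition_big rho (mem B)) => [|g]; last by rewrite inE => /andP[].
rewrite big_distrl -sum1_card big_distrl /=; apply: eq_bigr => t tB.
rewrite mul1n -(card_setXn_agree (hF t tB)) -sum1_card; congr (_ * _).
by apply: eq_bigl => g; rewrite !inE -hrho //; case: eqP => [->|_]; rewrite ?tB ?andbT ?andbF.
Qed.

Lemma card_setXn_pair (k1 k2 : I) (B : {set V * V}) :
  k1 != k2 -> (forall t, t \in B -> t.1 \in F k1 /\ t.2 \in F k2) ->
  #|[set g in prodF | (g k1, g k2) \in B]| * (#|F k1| * #|F k2|) = #|B| * #|prodF|.
Proof.
move=> n12 HB; have n21 : k2 != k1 by rewrite eq_sym.
have -> : #|F k1| * #|F k2| = \prod_(k in [set k1; k2]) #|F k|.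
  by rewrite big_setU1 ?big_set1 ?inE.
pose h (t : V * V) k := if k == k1 then t.1 else t.2.
apply: (card_setXn_preimage (h := h)) => [t /HB[h1 h2] k|[x y] g _].
  by rewrite !inE /h => /orP[] /eqP ->; rewrite ?eqxx ?(negbTE n21).
apply/eqP/forallP => [[e1 e2] k|gh].
  by apply/implyP; rewrite !inE /h => /orP[] /eqP ->; rewrite ?eqxx ?(negbTE n21) ?e1 ?e2.
have := gh k1; have := gh k2.
by rewrite !inE /h !eqxx orbT (negbTE n21) => /eqP -> /eqP ->.
Qed.

Lemma card_setXn_triple (k1 k2 k3 : I) (B : {set V * V * V}) :
  k1 != k2 -> k1 != k3 -> k2 != k3 ->
  (forall t, t \in B -> [/\ t.1.1 \in F k1, t.1.2 \in F k2 & t.2 \in F k3]) ->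
  #|[set g in prodF | (g k1, g k2, g k3) \in B]| * (#|F k1| * #|F k2| * #|F k3|)
  = #|B| * #|prodF|.
Proof.
move=> n12 n13 n23 HB.
have n21 : k2 != k1 by rewrite eq_sym.
have n31 : k3 != k1 by rewrite eq_sym.
have n32 : k3 != k2 by rewrite eq_sym.
have -> : #|F k1| * #|F k2| * #|F k3| = \prod_(k in k1 |: (k2 |: [set k3])) #|F k|.
  by rewrite big_setU1 ?big_setU1 ?big_set1 ?inE ?negb_or ?n12 ?n13 ?n23 //= mulnA.
pose h (t : V * V * V) k := if k == k1 then t.1.1 else if k == k2 then t.1.2 else t.2.
have hk : forall t, [/\ h t k1 = t.1.1, h t k2 = t.1.2 & h t k3 = t.2].
  by move=> t; rewrite /h !eqxx (negbTE n21) (negbTE n31) (negbTE n32).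
apply: (card_setXn_preimage (rho := fun g => (g k1, g k2, g k3)) (h := h))
  => [t /HB[h1 h2 h3] k|[[x y] z] g _].
  by have [e1 e2 e3] := hk t; rewrite !inE => /or3P[] /eqP ->; rewrite ?e1 ?e2 ?e3.
have [e1 e2 e3] := hk (x, y, z).
apply/eqP/forallP => [[g1 g2 g3] k|gh].
  by apply/implyP; rewrite !inE => /or3P[] /eqP ->; rewrite ?e1 ?e2 ?e3 ?g1 ?g2 ?g3.
have := gh k1; have := gh k2; have := gh k3.
by rewrite !inE !eqxx !orbT e1 e2 e3 /= => /eqP -> /eqP -> /eqP ->.
Qed.

End ProductCounting.

Lemma card_bigcup_mul_le (I T : finType) (P : pred I) (S : I -> {set T}) (N M : nat) :
  (forall i, P i -> #|S i| * N <= M) -> #|\bigcup_(i | P i) S i| * N <= #|I| * M.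
Proof.
move=> SM; apply: leq_trans (_ : (\sum_(i | P i) #|S i|) * N <= _).
  rewrite leq_mul2r; apply/orP; right.
  elim/big_rec2: _ => [|i n U _ leUn]; first by rewrite cards0.
  by rewrite (leq_trans (leq_card_setU _ _).1) ?leq_add2l.
rewrite big_distrl (leq_trans (leq_sum _ SM)) // sum_nat_cond_const.
by rewrite leq_mul2r max_card orbT.
Qed.

Lemma exists_avoiding (T I J : finType) (Om : {set T}) (PA : pred I) (A : I -> {set T})
    (PB : pred J) (B : J -> {set T}) (N : nat) :
  (0 < #|Om|)%N -> (#|I| + #|J| < N)%N ->
  (forall i, PA i -> #|A i| * N <= #|Om|)%N ->
  (forall j, PB j -> #|B j| * N <= #|Om|)%N ->
  exists g, [/\ g \in Om, forall i, PA i -> g \notin A i & forall j, PB j -> g \notin B j].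
Proof.
move=> Om0 IJN AN BN.
pose U := (\bigcup_(i | PA i) A i) :|: (\bigcup_(j | PB j) B j).
have UOm : (#|U| < #|Om|)%N.
  rewrite -(ltn_pmul2r (leq_ltn_trans (leq0n _) IJN)).
  apply: leq_ltn_trans (_ : (#|I| + #|J|) * #|Om| < _)%N; last by rewrite mulnC ltn_pmul2l.
  rewrite mulnDl (leq_trans (leq_mul (leq_card_setU _ _).1 (leqnn N))) // mulnDl.
  by rewrite leq_add ?card_bigcup_mul_le.
have [g /setDP[gOm gU]] : exists g, g \in Om :\: U.
  apply/set0Pn; rewrite -card_gt0 cardsD subn_gt0.
  exact: leq_ltn_trans (subset_leq_card (subsetIr _ _)) UOm.
exists g; split=> // [i Ai|j Bj]; apply: contra gU => gS; rewrite inE.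
  by apply/orP; left; apply/bigcupP; exists i.
by apply/orP; right; apply/bigcupP; exists j.
Qed.

Local Open Scope ring_scope.

Lemma subn_mul_le_of_ratio_ge (R : realType) (N d e : nat) : (0 < N)%N -> (e <= d)%N ->
  1 - (N%:R : R)^-1 <= e%:R / d%:R -> ((d - e) * N <= d)%N.
Proof.
move=> N0 ed H.
have [->|d0] := posnP d; first by rewrite sub0n.
have dR : (0 : R) < d%:R by rewrite ltr0n.
have NR : (0 : R) < N%:R by rewrite ltr0n.
rewrite ler_pdivlMr // in H.
rewrite -(ler_nat R) natrM natrB //.
have NV : (N%:R : R)^-1 * N%:R = 1 by rewrite mulVf // gt_eqF.
move: H NV; set x := (N%:R : R)^-1; set M := (N%:R : R); nra.
Qed.

Lemma TT_arc_neq (chi : nat) (i j : 'I_chi) : TT_arc i j -> i != j.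
Proof. by apply: contraTneq => ->; rewrite /TT_arc ltnn. Qed.

Section RandomEmbedding.
Variables (chi m : nat) (V : finType) (cls : V -> 'I_chi) (E : {set {set V}}).

Local Notation part := (vclass cls).

Definition class_maps : {set {ffun 'I_chi * 'I_m -> V}} :=
  @setXn _ (fun _ => V) (fun k => part k.1).

Definition nonedges (i j : 'I_chi) : {set V * V * V} :=
  dist_triples (part i) (part i) (part j) :\: edge_triples E (part i) (part i) (part j).

Definition arc_index (e : 'I_chi * 'I_chi * 'I_m * 'I_m * 'I_m) : bool :=
  let: (i, j, a, b, _) := e in TT_arc i j && (a != b).

Definition missed_edge (e : 'I_chi * 'I_chi * 'I_m * 'I_m * 'I_m) :
    {set {ffun 'I_chi * 'I_m -> V}} :=
  let: (i, j, a, b, c) := e in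
  [set g in class_maps | (g (i, a), g (i, b), g (j, c)) \in nonedges i j].

Definition collision_index (e : 'I_chi * 'I_m * 'I_m) : bool :=
  let: (_, a, b) := e in a != b.

Definition collision (e : 'I_chi * 'I_m * 'I_m) : {set {ffun 'I_chi * 'I_m -> V}} :=
  let: (i, a, b) := e in [set g in class_maps | g (i, a) == g (i, b)].

Lemma class_mapsP g : g \in class_maps -> forall k, cls (g k) = k.1.
Proof. by rewrite in_setXn => /forallP gF k; have := gF k; rewrite inE => /eqP. Qed.

Lemma card_class_maps : #|class_maps| = \prod_(k : 'I_chi * 'I_m) #|part k.1|.
Proof. exact: cardsXn. Qed.

Lemma card_nonedges_mul_le (R : realType) (N : nat) (i j : 'I_chi) :
  (0 < N)%N -> 1 - (N%:R : R)^-1 <= density R E (part i) (part i) (part j) ->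
  (#|nonedges i j| * N <= #|part i| * #|part i| * #|part j|)%N.
Proof.
move=> N0 dens.
have sub : edge_triples E (part i) (part i) (part j)
    \subset dist_triples (part i) (part i) (part j).
  by apply/subsetP => t; rewrite inE => /andP[].
rewrite cardsD (setIidPr sub).
apply: leq_trans (subn_mul_le_of_ratio_ge N0 (subset_leq_card sub) dens) _.
rewrite -!cardsX; apply/subset_leq_card/subsetP => t; rewrite !inE.
by case/and4P => -> -> -> _.
Qed.

Lemma card_missed_edge_mul_le (R : realType) (N : nat) (i j : 'I_chi) (a b c : 'I_m) :
  (0 < N)%N -> (0 < #|part i| * #|part i| * #|part j|)%N -> i != j -> a != b ->
  1 - (N%:R : R)^-1 <= density R E (part i) (part i) (part j) ->
  (#|missed_edge (i, j, a, b, c)| * N <= #|class_maps|)%N.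
Proof.
move=> N0 n0 nij ab dens.
have k12 : (i, a) != (i, b) by rewrite xpair_eqE eqxx.
have k13 : (i, a) != (j, c) by rewrite xpair_eqE negb_and nij.
have k23 : (i, b) != (j, c) by rewrite xpair_eqE negb_and nij.
have nonedges_in : forall t, t \in nonedges i j ->
    [/\ t.1.1 \in part i, t.1.2 \in part i & t.2 \in part j].
  by move=> t; rewrite !inE => /andP[_ /and4P[-> -> -> _]].
have /= count :=
  card_setXn_triple (F := fun k : 'I_chi * 'I_m => part k.1) k12 k13 k23 nonedges_in.
rewrite -(leq_pmul2r n0) mulnAC /= count mulnAC [X in (_ <= X)%N]mulnC.
by rewrite leq_mul2r (card_nonedges_mul_le N0 dens) orbT.
Qed.

Lemma card_collision (i : 'I_chi) (a b : 'I_m) :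
  (0 < #|part i|)%N -> a != b -> (#|collision (i, a, b)| * #|part i| = #|class_maps|)%N.
Proof.
move=> n0 ab.
have k12 : (i, a) != (i, b) by rewrite xpair_eqE eqxx.
pose diag := [set (x, x) | x in part i].
have diag_in : forall t, t \in diag -> t.1 \in part i /\ t.2 \in part i.
  by move=> t /imsetP[x xi ->].
have := card_setXn_pair (F := fun k : 'I_chi * 'I_m => part k.1) k12 diag_in.
have -> : [set g in class_maps | (g (i, a), g (i, b)) \in diag] = collision (i, a, b).
  apply/setP => g; rewrite /collision in_set [in RHS]in_set; apply: andb_id2l => gOm.
  apply/imsetP/eqP => [[x _ [-> ->]] //|->].
  by exists (g (i, b)) => //; rewrite inE class_mapsP.
rewrite card_imset => [count|x y [] //].
by apply/eqP; rewrite -(eqn_pmul2r n0) -mulnA count mulnC.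
Qed.

Lemma copy_of_avoiding_map (g : {ffun 'I_chi * 'I_m -> V}) : g \in class_maps ->
  (forall e, arc_index e -> g \notin missed_edge e) ->
  (forall e, collision_index e -> g \notin collision e) ->
  contains_H m (@TT_arc chi) E.
Proof.
move=> gOm no_missed no_collision; have gF := class_mapsP gOm.
have g_inj : injective g.
  move=> [i a] [i' a'] gaa'.
  have ii' : i = i' by rewrite -[i]/(i, a).1 -gF gaa' gF.
  subst i'; congr (_, _); apply/eqP; apply: contraT => aa'.
  by have := no_collision (i, a, a') aa'; rewrite inE gOm gaa' eqxx.
exists g; split=> // i j a b c ij ab.
have nij := TT_arc_neq ij.
have dist : (g (i, a), g (i, b), g (j, c)) \in dist_triples (part i) (part i) (part j).
  by rewrite inE /= !inE !gF /= !eqxx !(inj_eq g_inj) !xpair_eqE (negbTE nij) (negbTE ab) andbF.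
have := no_missed (i, j, a, b, c); rewrite /= ij ab => /(_ isT).
by rewrite inE gOm /= inE dist andbT negbK inE dist.
Qed.

End RandomEmbedding.

Theorem lemma5p4 (R : realType) (chi m : nat) :
  (2 <= chi)%N -> (2 <= m)%N ->
  exists gamma : R, 0 < gamma /\
    forall (V : finType) (cls : V -> 'I_chi) (E : {set {set V}}),
      sub_tournament_hypergraph (@TT_arc chi) cls E ->
      (forall i : 'I_chi, gamma^-1 <= (#|vclass cls i|)%:R) ->
      (forall i j : 'I_chi, TT_arc i j ->
         1 - gamma <= density R E (vclass cls i) (vclass cls i) (vclass cls j)) ->
      contains_H m (@TT_arc chi) E.
Proof.
(* The random map is a copy whatever the edges of F look like. *)
move=> _ _.
pose N := (#|{: 'I_chi * 'I_chi * 'I_m * 'I_m * 'I_m}| + #|{: 'I_chi * 'I_m * 'I_m}|).+1.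
exists N%:R^-1; split; first by rewrite invr_gt0 ltr0n.
move=> V cls E _ large dense.
have N_le i : (N <= #|vclass cls i|)%N by have := large i; rewrite invrK ler_nat.
have n_gt0 i : (0 < #|vclass cls i|)%N := leq_trans (ltn0Sn _) (N_le i).
have maps_gt0 : (0 < #|class_maps m cls|)%N by rewrite card_class_maps prodn_gt0.
have missed_small (e : 'I_chi * 'I_chi * 'I_m * 'I_m * 'I_m) :
    arc_index e -> (#|missed_edge cls E e| * N <= #|class_maps m cls|)%N.
  case: e => [[[[i j] a] b] c] /andP[ij ab].
  apply: (card_missed_edge_mul_le c _ _ (TT_arc_neq ij) ab (dense i j ij)) => //.
  by rewrite !muln_gt0 !n_gt0.
have collision_small (e : 'I_chi * 'I_m * 'I_m) :
    collision_index e -> (#|collision cls e| * N <= #|class_maps m cls|)%N.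
  by case: e => [[i a] b] ab; rewrite -(card_collision (n_gt0 i) ab) leq_mul2l N_le orbT.
have [g [gOm no_missed no_collision]] :=
  exists_avoiding maps_gt0 (ltnSn _) missed_small collision_small.
exact: copy_of_avoiding_map gOm no_missed no_collision.
Qed.
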